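(* Let $S=(X,\prec,\sqsubset)$ be an so-structure and $\alpha,\beta\in X$. Then ($\alpha\lhd\beta$ or $\beta\lhd\alpha$ for every $\lhd\in ext(S)$) if and only if ($\alpha\prec\beta$ or $\beta\prec\alpha$).
   Context: A stratified order structure (so-structure) is a triple $S=(X,\prec,\sqsubset)$ with $\prec,\sqsubset\subseteq X\times X$ such that for all $\alpha,\beta,\gamma\in X$: (S1) $\neg(\alpha\sqsubset\alpha)$; (S2) $\alpha\prec\beta\Rightarrow\alpha\sqsubset\beta$; (S3) $\alpha\sqsubset\beta\sqsubset\gamma\wedge\alpha\neq\gamma\Rightarrow\alpha\sqsubset\gamma$; (S4) $(\alpha\sqsubset\beta\wedge\beta\prec\gamma)\vee(\alpha\prec\beta\wedge\beta\sqsubset\gamma)\Rightarrow\alpha\prec\gamma$. For a relation $\lhd$ on $X$: $\alpha\frown_\lhd\beta$ iff $\alpha\neq\beta$, $\neg(\alpha\lhd\beta)$ and $\neg(\beta\lhd\alpha)$; $\lhd^\frown:=\lhd\cup\frown_\lhd$. A partial order $\lhd$ is stratified if $\frown_\lhd\cup\mathrm{id}_X$ is an equivalence relation. A stratified extension of $S$ is a stratified order $\lhd$ on $X$ with $\prec\subseteq\lhd$ and $\sqsubset\subseteq\lhd^\frown$; $ext(S)$ is the set of all stratified extensions of $S$. *)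

Definition rel (X : Type) := X -> X -> Prop.

Definition so_structure {X : Type} (prec sqsub : rel X) : Prop :=
  (forall a, ~ sqsub a a) /\
  (forall a b, prec a b -> sqsub a b) /\
  (forall a b c, sqsub a b -> sqsub b c -> a <> c -> sqsub a c) /\
  (forall a b c, (sqsub a b /\ prec b c) \/ (prec a b /\ sqsub b c) -> prec a c).

Definition incomp {X : Type} (R : rel X) : rel X :=
  fun a b => a <> b /\ ~ R a b /\ ~ R b a.

Definition frown_ext {X : Type} (R : rel X) : rel X :=
  fun a b => R a b \/ incomp R a b.

Definition partial_order {X : Type} (R : rel X) : Prop :=
  (forall a, ~ R a a) /\ (forall a b c, R a b -> R b c -> R a c).

Definition equivalence {X : Type} (E : rel X) : Prop :=
  (forall a, E a a) /\ (forall a b, E a b -> E b a) /\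
  (forall a b c, E a b -> E b c -> E a c).

Definition stratified_order {X : Type} (R : rel X) : Prop :=
  partial_order R /\ equivalence (fun a b => incomp R a b \/ a = b).

Definition stratified_extension {X : Type} (prec sqsub R : rel X) : Prop :=
  stratified_order R /\
  (forall a b, prec a b -> R a b) /\
  (forall a b, sqsub a b -> frown_ext R a b).

(* If a and b are not related by prec, put them in one stratum: the reflexive
   closure of sqsub enlarged by a ~ b, together with the strict constraints
   prec, is a preorder with a compatible strict part.  A Szpilrajn-type
   argument extends it to one whose preorder <= is total: in a maximal
   extension (Zorn) two incomparable x, y could still be forced to x <= y,
   since y < x is not forced (it would give y <= x).  Then R x y := ~ y <= x
   is a stratified order whose strata are the <=-classes; it extends prec,
   satisfies sqsub in its frown-extension, and keeps a and b in one stratum,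
   so neither R a b nor R b a. *)

From mathcomp Require Import ssreflect ssrbool boolp classical_sets.

Set Implicit Arguments.
Unset Strict Implicit.

Local Open Scope classical_set_scope.

Lemma Zorn_bigcup_above (T : Type) (P : set (set T)) (A0 : set T) :
  P A0 ->
  (forall F : set (set T), F `<=` P -> F !=set0 -> total_on F subset ->
    P (\bigcup_(X in F) X)) ->
  exists A, [/\ A0 `<=` A, P A & forall B, A `<` B -> ~ P B].
Proof.
move=> PA0 Pcup.
have [|D [PD Dmax]] := Zorn_bigcup (P := fun D => P (A0 `|` D)).
  move=> F FP Ftot; have [F0|/nonemptyPn ->] := pselect (F !=set0); last first.
    by rewrite bigcup_set0 setU0.
  rewrite -bigcupUr // (_ : \bigcup_(D in F) _ = \bigcup_(X in setU A0 @` F) X);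
    last by rewrite bigcup_image.
  apply: Pcup.
  - by move=> _ [D FD <-]; exact: FP.
  - by case: F0 => D FD; exists (A0 `|` D), D.
  - move=> _ _ [D FD <-] [D' FD' <-].
    by case: (Ftot D D' FD FD') => DD'; [left|right]; apply: setUS.
exists (A0 `|` D); split; [exact: subsetUl | exact: PD |].
move=> B [DB nBD] PB; have A0B : A0 `<=` B by move=> x A0x; apply: DB; left.
apply: (Dmax B); last by rewrite setUidr.
split; first by move=> x Dx; apply: DB; right.
by move=> BD; apply: nBD => x /BD; exact: subsetUr.
Qed.

Lemma bigcup_chain2 (T : Type) (F : set (set T)) (u v : T) :
  total_on F subset -> (\bigcup_(X in F) X) u -> (\bigcup_(X in F) X) v ->
  exists2 A, F A & A u /\ A v.
Proof.
move=> Ftot [A FA Au] [B FB Bv].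
case: (Ftot A B FA FB) => [AB|BA]; first by exists B => //; split => //; exact: AB.
by exists A => //; split => //; exact: BA.
Qed.

Section ConsistentPairs.
Variable X : Type.
Implicit Types (E : set (bool * X * X)) (T P : rel X).

(* A weak relation [T] and a strict relation [P] are coded together as one set
   of tagged pairs, so that Zorn's lemma for sets applies to them. *)
Definition pair_set T P : set (bool * X * X) :=
  fun '(k, x, y) => if k then T x y else P x y.

Definition weak E : rel X := fun x y => E (true, x, y).
Definition strict E : rel X := fun x y => E (false, x, y).

Record consistent E : Prop := {
  weak_refl : forall x, weak E x x;
  weak_trans : forall x y z, weak E x y -> weak E y z -> weak E x z;
  strict_weak : forall x y, strict E x y -> weak E x y;
  strict_weak_trans : forall x y z, strict E x y -> weak E y z -> strict E x z;
  weak_strict_trans : forall x y z, weak E x y -> strict E y z -> strict E x z;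
  strict_irrefl : forall x, ~ strict E x x }.

Lemma consistent_bigcup (F : set (set (bool * X * X))) :
  F `<=` consistent -> F !=set0 -> total_on F subset ->
  consistent (\bigcup_(A in F) A).
Proof.
move=> Fcons [A0 FA0] Ftot.
have {}Fcons A : F A -> consistent A by exact: Fcons.
split.
- by move=> x; exists A0 => //; apply: weak_refl; exact: Fcons.
- move=> x y z /(bigcup_chain2 Ftot) /[apply] -[A FA [xy yz]].
  by exists A => //; exact: (weak_trans (Fcons _ FA) xy yz).
- by move=> x y [A FA xy]; exists A => //; exact: (strict_weak (Fcons _ FA) xy).
- move=> x y z /(bigcup_chain2 Ftot) /[apply] -[A FA [xy yz]].
  by exists A => //; exact: (strict_weak_trans (Fcons _ FA) xy yz).
- move=> x y z /(bigcup_chain2 Ftot) /[apply] -[A FA [xy yz]].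
  by exists A => //; exact: (weak_strict_trans (Fcons _ FA) xy yz).
- by move=> x [A FA xx]; exact: (strict_irrefl (Fcons _ FA) xx).
Qed.

Section AddPair.
Variables (E : set (bool * X * X)) (c d : X).
Hypothesis consE : consistent E.

Definition add_weak : rel X := fun u v => weak E u v \/ weak E u c /\ weak E d v.

Definition add_pair : set (bool * X * X) :=
  pair_set add_weak (fun u v => exists w z, [/\ add_weak u w, strict E w z & add_weak z v]).

Lemma add_weak_trans x y z : add_weak x y -> add_weak y z -> add_weak x z.
Proof.
have tr := weak_trans consE.
case=> [xy|[xc dy]] [yz|[yc dz]]; rewrite /add_weak.
- by left; exact: tr xy yz.
- by right; split => //; exact: tr xy yc.
- by right; split => //; exact: tr dy yz.
- by right.
Qed.

Lemma add_weak_refl x : add_weak x x.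
Proof. by left; exact: weak_refl. Qed.

Lemma sub_add_pair : E `<=` add_pair.
Proof.
case=> [[[] x] y] Exy /=; first by left.
by exists x, y; split => //; exact: add_weak_refl.
Qed.

Lemma weak_add_pair : weak add_pair c d.
Proof. by right; split; exact: weak_refl. Qed.

Lemma strict_add_pair x y : strict add_pair x y ->
  [\/ strict E x y, strict E x c /\ weak E d y, weak E x c /\ strict E d y
    | strict E d c].
Proof.
have [_ _ _ PT TP _] := consE.
case=> w [z [[xw|[xc dw]] wz [zy|[zc dy]]]].
- by constructor 1; apply: TP xw _; exact: PT wz zy.
- by constructor 2; split => //; apply: TP xw _; exact: PT wz zc.
- by constructor 3; split => //; apply: TP dw _; exact: PT wz zy.
- by constructor 4; apply: TP dw _; exact: PT wz zc.
Qed.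

Hypothesis not_strict_dc : ~ strict E d c.

Lemma consistent_add_pair : consistent add_pair.
Proof.
have [_ _ _ PT TP P_irr] := consE.
split => /=.
- exact: add_weak_refl.
- exact: add_weak_trans.
- move=> x y [w [z [xw wz zy]]]; apply: add_weak_trans xw _.
  by apply: add_weak_trans zy; left; exact: strict_weak wz.
- move=> x y z [w [z' [xw wz' z'y]]] yz.
  by exists w, z'; split => //; exact: add_weak_trans z'y yz.
- move=> x y z xy [w [z' [yw wz' z'z]]].
  by exists w, z'; split => //; exact: add_weak_trans xy yw.
- move=> x /strict_add_pair[/P_irr //|[xc dx]|[xc dx]|//]; apply: not_strict_dc.
  + exact: TP dx xc.
  + exact: PT dx xc.
Qed.

End AddPair.

Lemma maximal_consistent_total E :
  consistent E -> (forall B, E `<` B -> ~ consistent B) ->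
  forall x y, weak E x y \/ weak E y x.
Proof.
move=> consE Emax x y; apply: contrapT => /not_orP[nxy nyx].
have nPyx : ~ strict E y x by move/(strict_weak consE).
apply: (Emax (add_pair E x y)); last exact: consistent_add_pair.
split; first exact: sub_add_pair.
by move/(_ (true, x, y) (weak_add_pair x y consE)).
Qed.

Theorem consistent_total_extension E0 :
  consistent E0 ->
  exists E, [/\ E0 `<=` E, consistent E & forall x y, weak E x y \/ weak E y x].
Proof.
move=> cons0; have [|E [E0E consE Emax]] := Zorn_bigcup_above cons0.
  by move=> F; exact: consistent_bigcup.
by exists E; split => //; exact: maximal_consistent_total.
Qed.

End ConsistentPairs.

Section StratifiedFromTotalPreorder.
Variables (X : Type) (T : rel X).
Hypotheses (T_refl : forall x, T x x)
  (T_trans : forall x y z, T x y -> T y z -> T x z)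
  (T_total : forall x y, T x y \/ T y x).

Definition strict_of : rel X := fun x y => ~ T y x.

Lemma incomp_strict_of x y : incomp strict_of x y <-> [/\ x <> y, T x y & T y x].
Proof.
rewrite /incomp /strict_of; split; first by case=> xy [/contrapT Txy /contrapT Tyx].
by case=> xy Txy Tyx; split=> //; split=> nT; apply: nT.
Qed.

Lemma stratified_strict_of : stratified_order strict_of.
Proof.
split; first split.
- by move=> x; apply.
- move=> x y z nTyx nTzy Tzx; case: (T_total x y) => [Txy|]; last exact: nTyx.
  by apply: nTzy; exact: T_trans Tzx Txy.
split; first by move=> x; right.
split=> [x y|x y z].
- case=> [/incomp_strict_of[xy Txy Tyx] | ->]; last by right.
  by left; apply/incomp_strict_of; split => // yx; apply: xy.
- case=> [Ixy | ->] // [Iyz | <-]; last by left.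
  move: Ixy Iyz => /incomp_strict_of[_ Txy Tyx] /incomp_strict_of[_ Tyz Tzy].
  have [->|xz] := pselect (x = z); first by right.
  by left; apply/incomp_strict_of; split=> //; [exact: T_trans Txy Tyz|exact: T_trans Tzy Tyx].
Qed.

Lemma frown_ext_strict_of x y : x <> y -> T x y -> frown_ext strict_of x y.
Proof.
move=> xy Txy; have [Tyx|nTyx] := pselect (T y x); last by left.
by right; exact/incomp_strict_of.
Qed.

End StratifiedFromTotalPreorder.

Section SoStructure.
Variables (X : Type) (prec sqsub : rel X).
Hypothesis so : so_structure prec sqsub.

Definition so_pair : set (bool * X * X) := pair_set (fun x y => x = y \/ sqsub x y) prec.

Lemma consistent_so_pair : consistent so_pair.
Proof.
have [S1 [S2 [S3 S4]]] := so.
split; rewrite /weak /strict /=.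
- by move=> x; left.
- move=> x y z [->|xy] // [<-|yz]; first by right.
  by have [->|xz] := pselect (x = z); [left|right; exact: S3 xy yz xz].
- by move=> x y /S2; right.
- by move=> x y z xy [<-|yz] //; apply: (S4 x y z); right.
- by move=> x y z [->|xy] yz //; apply: (S4 x y z); left.
- by move=> x /S2 /S1.
Qed.

Lemma so_pair_merge a b :
  ~ prec a b -> ~ prec b a ->
  exists E, [/\ so_pair `<=` E, consistent E, weak E a b & weak E b a].
Proof.
move=> nab nba; have cons0 := consistent_so_pair.
have cons1 : consistent (add_pair so_pair a b) by exact: consistent_add_pair.
have nP1ab : ~ strict (add_pair so_pair a b) a b.
  by case/(strict_add_pair cons0) => [|[/(strict_irrefl cons0)]|[_ /(strict_irrefl cons0)]|].
exists (add_pair (add_pair so_pair a b) b a); split.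
- by move=> u /(sub_add_pair a b cons0) /(sub_add_pair b a cons1).
- exact: consistent_add_pair.
- by apply: (sub_add_pair b a cons1); exact: weak_add_pair.
- exact: weak_add_pair.
Qed.

Lemma stratified_extension_of_total E :
  so_pair `<=` E -> consistent E -> (forall x y, weak E x y \/ weak E y x) ->
  stratified_extension prec sqsub (strict_of (weak E)).
Proof.
move=> sub consE totE; have [S1 _] := so.
split; first exact: stratified_strict_of (weak_refl consE) (weak_trans consE) totE.
split=> x y.
- move=> /(sub (false, x, y)) Pxy Eyx.
  exact: (strict_irrefl consE (strict_weak_trans consE Pxy Eyx)).
- move=> sxy; apply: frown_ext_strict_of.
    by move=> xy; apply: (S1 x); rewrite {2}xy.
  by apply: (sub (true, x, y)); right.
Qed.

End SoStructure.

Theorem mainTheorem3 (X : Type) (prec sqsub : rel X) (a b : X) :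
  so_structure prec sqsub ->
  ((forall R : rel X, stratified_extension prec sqsub R -> R a b \/ R b a)
   <-> (prec a b \/ prec b a)).
Proof.
move=> so; split; last by case=> [ab|ba] R [_ [precR _]]; [left|right]; exact: precR.
move=> ext_comparable; apply: contrapT => /not_orP[nab nba].
have [E1 [sub1 cons1 ab ba]] := so_pair_merge so nab nba.
have [E [E1E consE totE]] := consistent_total_extension cons1.
have extR := stratified_extension_of_total so (subset_trans sub1 E1E) consE totE.
by case: (ext_comparable _ extR); apply; apply: E1E.
Qed.
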